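(* Let $\mathcal M$ be a map in class $2_{\{0,1\}}$ with underlying graph $\Gamma$. Then the boundaries of the faces of $\mathcal M$ are $\mathrm{Aut}(\mathcal M)$-symmetric consistent cycles of $\Gamma$.
   Context: A map is a $2$-cell embedding of a connected simple graph $\Gamma$ (its underlying graph) in a closed surface; the components of the complement are the faces. All maps considered are polytopal: flags (triangles of the barycentric subdivision) correspond bijectively to incident triples (vertex, edge, face). For a flag $\Phi$ and $i\in\{0,1,2\}$, $\Phi^i$ denotes the unique flag differing from $\Phi$ exactly in its vertex ($i=0$), edge ($i=1$) or face ($i=2$). $\mathrm{Aut}(\mathcal M)$ is the group of automorphisms of $\Gamma$ mapping faces to faces; it acts on flags. A map is in class $2_{\{0,1\}}$ if $\mathrm{Aut}(\mathcal M)$ has exactly two orbits on flags and, for every flag $\Phi$, the flags $\Phi^0$ and $\Phi^1$ lie in the orbit of $\Phi$ while $\Phi^2$ does not. (For such maps $\mathrm{Aut}(\mathcal M)$ acts arc-transitively on $\Gamma$.) For an arc-transitive group $G\le \mathrm{Aut}(\Gamma)$, a directed cycle $(v_0,\ldots,v_{r-1})$ is $G$-consistent if some $g\in G$ maps each $v_i$ to $v_{i+1}$ (indices mod $r$); an undirected cycle is $G$-consistent if both its orientations are, and it is $G$-symmetric if moreover some element of $G$ maps one orientation to the other. *)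

From mathcomp Require Import all_boot fingroup perm.
Set Implicit Arguments. Unset Strict Implicit. Unset Printing Implicit Defensive.

Section Maps.
Variables (V F : finType) (adj : rel V) (bnd : F -> seq V).

(* A cycle of the graph, given as the cyclic sequence of its vertices
   (directed: the orientation is the order of the sequence). *)
Definition is_cycle (c : seq V) : bool :=
  [&& 2 < size c, uniq c & path.cycle adj c].

Definition face_has_edge (f : F) (x y : V) : bool :=
  (x \in bnd f) && ((next (bnd f) x == y) || (prev (bnd f) x == y)).

Definition link (v : V) (f g : F) : bool :=
  [exists w, face_has_edge f v w && face_has_edge g v w] && (f != g).

(* Polytopal map: a connected simple graph, a finite set of faces whose
   boundaries are cycles of the graph, every edge on exactly two faces, and
   around every vertex the faces form a single rotation (closed surface). *)
Definition polytopal_map : Prop :=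
  [/\ symmetric adj /\ irreflexive adj,
      (forall x y, connect adj x y) /\ (exists x y, adj x y),
      (forall f, is_cycle (bnd f)),
      (forall x y, adj x y -> #|[set f | face_has_edge f x y]| = 2) &
      (forall v f g, v \in bnd f -> v \in bnd g -> connect (link v) f g)].

(* Two cyclic sequences represent the same undirected cycle. *)
Definition same_cycle (c d : seq V) : Prop :=
  exists k, d = rot k c \/ d = rot k (rev c).

(* (g, s) is an automorphism of the map: g an automorphism of the graph and
   s the induced permutation of faces (faces are mapped to faces). *)
Definition is_map_aut (g : {perm V}) (s : {perm F}) : Prop :=
  (forall x y, adj (g x) (g y) = adj x y) /\
  (forall f, same_cycle (map g (bnd f)) (bnd (s f))).

(* Flags (v, w, f): v a vertex, e = {v,w} an edge, f a face, all incident. *)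
Definition flag := (V * V * F)%type.
Definition is_flag (X : flag) : Prop :=
  let: (v, w, f) := X in adj v w /\ face_has_edge f v w.

Definition act_flag (g : {perm V}) (s : {perm F}) (X : flag) : flag :=
  let: (v, w, f) := X in (g v, g w, s f).

Definition same_orbit (X Y : flag) : Prop :=
  exists g s, is_map_aut g s /\ act_flag g s X = Y.

Definition flag_adj (i : 'I_3) (X Y : flag) : Prop :=
  let: (v, w, f) := X in let: (v', w', f') := Y in
  match val i with
  | 0 => [/\ v' = w, w' = v & f' = f]
  | 1 => [/\ v' = v, f' = f, w' != w & face_has_edge f v w']
  | _ => [/\ v' = v, w' = w, f' != f & face_has_edge f' v w]
  end.

Definition class2_01 : Prop :=
  [/\ (exists X Y, [/\ is_flag X, is_flag Y, ~ same_orbit X Y &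
          forall Z, is_flag Z -> same_orbit X Z \/ same_orbit Y Z]),
      (forall X Y, is_flag X -> flag_adj (inord 0) X Y -> same_orbit X Y),
      (forall X Y, is_flag X -> flag_adj (inord 1) X Y -> same_orbit X Y) &
      (forall X Y, is_flag X -> flag_adj (inord 2) X Y -> ~ same_orbit X Y)].

(* G = Aut(M), viewed as a group of automorphisms of the graph. *)
Definition in_aut (g : {perm V}) : Prop := exists s, is_map_aut g s.

Definition consistent_dcycle (c : seq V) : Prop :=
  exists g, in_aut g /\ map g c = rot 1 c.

(* undirected cycle: both orientations consistent *)
Definition consistent_cycle (c : seq V) : Prop :=
  is_cycle c /\ consistent_dcycle c /\ consistent_dcycle (rev c).

Definition symmetric_cycle (c : seq V) : Prop :=
  consistent_cycle c /\
  exists g, in_aut g /\ exists k, map g c = rot k (rev c).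

End Maps.

From mathcomp Require Import all_boot fingroup perm.
Set Implicit Arguments. Unset Strict Implicit. Unset Printing Implicit Defensive.

(* Let (x, y, z, ...) be the boundary of a face f. Because Phi^0 and Phi^1
   lie in the orbit of Phi, automorphisms carry the flag (x, xy, f) to
   (y, yx, f) and, composing, to (y, yz, f). These automorphisms fix f, so
   they act on its boundary as rotations or reflections, and such a symmetry
   is determined by the images of two consecutive vertices: the first one is
   a reflection of the boundary and the composite is the rotation by one
   step. The same argument applied to the reversed boundary shows that the
   other orientation is consistent as well. *)

Section RotatedSequences.
Variable T : eqType.
Implicit Types (c : seq T) (x : T).

Lemma head_rot x0 c n : n < size c -> head x0 (rot n c) = nth x0 c n.
Proof. by move=> lt_n; rewrite -nth0 nth_cat size_drop subn_gt0 lt_n nth_drop addn0. Qed.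

Lemma rot_inj_head x0 c k m :
  uniq c -> head x0 (rot k c) = head x0 (rot m c) -> rot k c = rot m c.
Proof.
have [c_nil _ _ | c_gt0 c_uniq] := posnP (size c).
  by rewrite !rot_oversize ?c_nil.
have rot_lt n : exists2 n', n' < size c & rot n c = rot n' c.
  by case: (ltnP n (size c)) => [|le_c_n]; [exists n | exists 0; rewrite ?rot0 ?rot_oversize].
have [k' lt_k ->] := rot_lt k; have [m' lt_m ->] := rot_lt m.
by rewrite !head_rot // => /eqP; rewrite nth_uniq // => /eqP ->.
Qed.

End RotatedSequences.

Section SameCycle.
Variable T : finType.
Implicit Types c d e : seq T.

Lemma same_cycle_refl c : same_cycle c c.
Proof. by exists 0; left; rewrite rot0. Qed.

Lemma same_cycle_rev c : same_cycle c (rev c).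
Proof. by exists 0; right; rewrite rot0. Qed.

Lemma same_cycle_sym c d : same_cycle c d -> same_cycle d c.
Proof.
case=> k [->|->]; last by exists k; right; rewrite -rev_rotr rotK revK.
by exists (size (rot k c) - k); left; rewrite -/(rotr k _) rotK.
Qed.

Lemma same_cycle_trans c d e : same_cycle c d -> same_cycle d e -> same_cycle c e.
Proof.
case=> k [->|->] [j [->|->]]; rewrite ?rev_rot ?revK /rotr rot_rot_add;
  first [by eexists; left | by eexists; right].
Qed.

Lemma same_cycle_map (g : T -> T) c d :
  same_cycle c d -> same_cycle (map g c) (map g d).
Proof. by case=> k [->|->]; exists k; [left|right]; rewrite map_rot ?map_rev. Qed.

Lemma same_cycle_size c d : same_cycle c d -> size d = size c.
Proof. by case=> k [->|->]; rewrite size_rot ?size_rev. Qed.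

Lemma same_cycle_uniq c d : same_cycle c d -> uniq d = uniq c.
Proof. by case=> k [->|->]; rewrite rot_uniq ?rev_uniq. Qed.

End SameCycle.

Section Orientation.
Variables (T : finType) (g : T -> T) (x y z : T) (s : seq T).
Hypotheses (g_inj : injective g) (c_uniq : uniq [:: x, y, z & s]).
Hypothesis g_stable : same_cycle [:: x, y, z & s] (map g [:: x, y, z & s]).

Let next_x : next [:: x, y, z & s] x = y.
Proof. by rewrite /= eqxx. Qed.

Let next_y : next [:: x, y, z & s] y = z.
Proof.
by move: c_uniq; rewrite /= inE => /andP[/norP[/negbTE y_x _] _]; rewrite eq_sym y_x eqxx.
Qed.

Let z_neq_x : z != x.
Proof.
by move: c_uniq; rewrite /= !inE => /andP[/norP[_ /norP[x_z _]] _]; rewrite eq_sym.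
Qed.

Lemma map_eq_rot1 : g x = y -> g y = z -> map g [:: x, y, z & s] = rot 1 [:: x, y, z & s].
Proof.
move=> gx gy; case: g_stable => k [] map_g.
  by rewrite map_g; apply: (rot_inj_head (x0 := x) c_uniq); rewrite -map_g /= gx.
have prev_y := prev_next c_uniq x; rewrite next_x in prev_y.
have := next_map g_inj c_uniq x.
rewrite map_g next_rot ?rev_uniq // next_rev // gx prev_y next_x gy.
by move/eqP; rewrite eq_sym (negbTE z_neq_x).
Qed.

Lemma map_eq_rot_rev : g x = y -> g y = x ->
  exists k, map g [:: x, y, z & s] = rot k (rev [:: x, y, z & s]).
Proof.
move=> gx gy; case: g_stable => k [] map_g; last by exists k.
have := next_map g_inj c_uniq x.
rewrite map_g next_rot // gx next_y next_x gy.
by move/eqP; rewrite (negbTE z_neq_x).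
Qed.

End Orientation.

Section FaceAutomorphisms.
Variables (V F : finType) (adj : rel V) (bnd : F -> seq V).
Implicit Types (f : F) (d : seq V) (x y : V).

Lemma is_map_autM g1 s1 g2 s2 :
  is_map_aut adj bnd g1 s1 -> is_map_aut adj bnd g2 s2 ->
  is_map_aut adj bnd (g1 * g2)%g (s1 * s2)%g.
Proof.
move=> [adj_g1 bnd_g1] [adj_g2 bnd_g2]; split=> [x y|f]; first by rewrite !permM adj_g2 adj_g1.
rewrite permM -(eq_map (fun x => esym (permM g1 g2 x))) map_comp.
exact: same_cycle_trans (same_cycle_map g2 (bnd_g1 f)) (bnd_g2 _).
Qed.

Lemma same_orbit_trans X Y Z :
  same_orbit adj bnd X Y -> same_orbit adj bnd Y Z -> same_orbit adj bnd X Z.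
Proof.
move=> [g1 [s1 [aut1 <-]]] [g2 [s2 [aut2 <-]]].
exists (g1 * g2)%g, (s1 * s2)%g; split; first exact: is_map_autM.
by case: X => [[v w] f] /=; rewrite !permM.
Qed.

Lemma face_has_edge_sym f x y :
  uniq (bnd f) -> face_has_edge bnd f x y -> face_has_edge bnd f y x.
Proof.
move=> f_uniq /andP[x_f /orP[/eqP<-|/eqP<-]]; apply/andP; split.
- by rewrite mem_next.
- by rewrite prev_next // eqxx orbT.
- by rewrite mem_prev.
- by rewrite next_prev // eqxx.
Qed.

Lemma face_has_edge_next f d x :
  uniq (bnd f) -> same_cycle (bnd f) d -> x \in d -> face_has_edge bnd f x (next d x).
Proof.
move=> f_uniq [k [->|->]]; rewrite mem_rot ?mem_rev => x_f; apply/andP; split=> //.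
  by rewrite next_rot // eqxx.
by rewrite next_rot ?rev_uniq // next_rev // eqxx orbT.
Qed.

Lemma face_has_edge_adj f x y :
  symmetric adj -> is_cycle adj (bnd f) -> face_has_edge bnd f x y -> adj x y.
Proof.
move=> adj_sym /and3P[_ f_uniq f_cycle] /andP[x_f /orP[/eqP<-|/eqP<-]].
  exact: next_cycle f_cycle x_f.
by rewrite adj_sym -{2}(next_prev f_uniq x) (next_cycle f_cycle) ?mem_prev.
Qed.

Hypotheses (map_M : polytopal_map adj bnd) (class_M : class2_01 adj bnd).

Let adj_sym : symmetric adj.
Proof. by case: map_M => -[]. Qed.

Let face_cycle f : is_cycle adj (bnd f).
Proof. by case: map_M. Qed.

Let face_uniq f : uniq (bnd f).
Proof. by case/and3P: (face_cycle f). Qed.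

Let edge_flag f x y : face_has_edge bnd f x y -> is_flag adj bnd (x, y, f).
Proof. by move=> fxy; split; first exact: face_has_edge_adj fxy. Qed.

Lemma same_orbit_swap f x y :
  face_has_edge bnd f x y -> same_orbit adj bnd (x, y, f) (y, x, f).
Proof.
case: class_M => _ swap_orbit _ _ fxy; apply: swap_orbit; first exact: edge_flag.
by rewrite /flag_adj [val _]inordK.
Qed.

Lemma same_orbit_turn f x y y' :
  face_has_edge bnd f x y -> face_has_edge bnd f x y' -> y' != y ->
  same_orbit adj bnd (x, y, f) (x, y', f).
Proof.
case: class_M => _ _ turn_orbit _ fxy fxy' y'_y; apply: turn_orbit; first exact: edge_flag.
by rewrite /flag_adj [val _]inordK.
Qed.

Lemma same_orbit_face_stabilizer f d x y x' y' :
  same_cycle (bnd f) d -> same_orbit adj bnd (x, y, f) (x', y', f) ->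
  exists g, [/\ in_aut adj bnd g, g x = x', g y = y' & same_cycle d (map g d)].
Proof.
move=> f_d [g [s [aut_g [gx gy sf]]]]; exists g; split=> //; first by exists s.
have [_ bnd_g] := aut_g.
apply: same_cycle_trans (same_cycle_sym f_d) _.
apply: same_cycle_trans (same_cycle_map g f_d).
by have := bnd_g f; rewrite sf; apply: same_cycle_sym.
Qed.

Lemma face_boundary_path f d : same_cycle (bnd f) d ->
  exists x y z s, [/\ d = [:: x, y, z & s], uniq d,
    face_has_edge bnd f x y & face_has_edge bnd f y z].
Proof.
move=> f_d; have d_uniq : uniq d by rewrite (same_cycle_uniq f_d).
have : 2 < size d by rewrite (same_cycle_size f_d); case/and3P: (face_cycle f).
case: d f_d d_uniq => [|x [|y [|z s]]] // f_d d_uniq _; exists x, y, z, s; split=> //.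
  by have := face_has_edge_next (face_uniq f) f_d (mem_head x _); rewrite /= eqxx.
have y_d : y \in [:: x, y, z & s] by rewrite !inE eqxx orbT.
have := face_has_edge_next (face_uniq f) f_d y_d.
by move: d_uniq; rewrite /= inE => /andP[/norP[/negbTE y_x _] _]; rewrite eq_sym y_x eqxx.
Qed.

Lemma face_boundary_consistent f d : same_cycle (bnd f) d -> consistent_dcycle adj bnd d.
Proof.
move=> f_d; have [x [y [z [s [d_eq d_uniq fxy fyz]]]]] := face_boundary_path f_d; subst d.
have z_x : z != x.
  by move: d_uniq; rewrite /= !inE => /andP[/norP[_ /norP[x_z _]] _]; rewrite eq_sym.
have orbit_xy_yz : same_orbit adj bnd (x, y, f) (y, z, f).
  apply: same_orbit_trans (same_orbit_swap fxy) (same_orbit_turn _ fyz z_x).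
  exact: face_has_edge_sym fxy.
have [g [aut_g gx gy g_d]] := same_orbit_face_stabilizer f_d orbit_xy_yz.
by exists g; split=> //; apply: map_eq_rot1 => //; apply: perm_inj.
Qed.

Lemma face_boundary_reflected f d : same_cycle (bnd f) d ->
  exists g, in_aut adj bnd g /\ exists k, map g d = rot k (rev d).
Proof.
move=> f_d; have [x [y [z [s [d_eq d_uniq fxy _]]]]] := face_boundary_path f_d; subst d.
have [g [aut_g gx gy g_d]] := same_orbit_face_stabilizer f_d (same_orbit_swap fxy).
by exists g; split=> //; apply: map_eq_rot_rev => //; apply: perm_inj.
Qed.

End FaceAutomorphisms.

Theorem lemma2p5 (V F : finType) (adj : rel V) (bnd : F -> seq V) :
  polytopal_map adj bnd ->
  class2_01 adj bnd ->
  forall f : F, symmetric_cycle adj bnd (bnd f).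
Proof.
move=> map_M class_M f; have [_ _ face_cycle _ _] := map_M.
have consistent := face_boundary_consistent map_M class_M.
split; last exact: (face_boundary_reflected map_M class_M (same_cycle_refl (bnd f))).
split; first exact: face_cycle.
by split; apply: consistent; [apply: same_cycle_refl | apply: same_cycle_rev].
Qed.
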